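(* For every odd integer $n\ge 3$ and every positive divisor $\lambda$ of $2n$, there exists a ${}^\lambda\mathrm{H}_{2n/\lambda}(n;3)$.
   Context: For positive integers $m,n,s,k,\lambda,t$ with $t$ dividing $\frac{2nk}{\lambda}$, let $v=\frac{2nk}{\lambda}+t$ and $J$ the subgroup of $\mathbb{Z}_v$ of order $t$. A ${}^\lambda\mathrm{H}_t(m,n;s,k)$ is an $m\times n$ partially filled array with entries in $\mathbb{Z}_v$ such that: (a) each row has exactly $s$ and each column exactly $k$ filled cells; (b) the multiset $\{\pm x: x$ an entry of a filled cell$\}$ contains each element of $\mathbb{Z}_v\setminus J$ exactly $\lambda$ times and no element of $J$; (c) every row and every column sums to $0$ in $\mathbb{Z}_v$. When $m=n$ (so $s=k$) it is denoted ${}^\lambda\mathrm{H}_t(n;k)$. *)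

From mathcomp Require Import all_boot all_order all_algebra.
Set Implicit Arguments. Unset Strict Implicit. Unset Printing Implicit Defensive.
Import GRing.Theory.
Local Open Scope ring_scope.

(* Heffter array  ^lam H_t(m,n;s,k).
   v = 2nk/lam + t ; entries in Z_v (here v >= 2 always).
   Cells: A i j = None (empty) or Some x (filled with x). *)

Definition subJ (v t : nat) : {set 'Z_v} :=
  [set x : 'Z_v | ((v %/ t)%N %| (x : nat))%N].

Definition is_heffter (lam t m n s k v : nat)
    (A : 'I_m -> 'I_n -> option 'Z_v) : Prop :=
  (forall i : 'I_m, #|[set j : 'I_n | A i j != None]| = s) /\
  (forall j : 'I_n, #|[set i : 'I_m | A i j != None]| = k) /\
  (* (b) the multiset {+-x} covers Z_v \ J exactly lam times, J never *)
  (forall y : 'Z_v,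
     (#|[set p : 'I_m * 'I_n | A p.1 p.2 == Some y]|
      + #|[set p : 'I_m * 'I_n | A p.1 p.2 == Some (- y)]|)%N
     = (if y \in subJ v t then 0 else lam)%N) /\
  (forall i : 'I_m, \sum_(j < n) odflt 0 (A i j) = 0) /\
  (forall j : 'I_n, \sum_(i < m) odflt 0 (A i j) = 0).

Definition exists_heffter (lam t m n s k : nat) : Prop :=
  (0 < lam)%N /\ (0 < t)%N /\ (0 < m)%N /\ (0 < n)%N /\ (0 < s)%N /\
  (0 < k)%N /\ (lam %| 2 * n * k)%N /\ (t %| (2 * n * k) %/ lam)%N /\
  exists A : 'I_m -> 'I_n -> option 'Z_((2 * n * k) %/ lam + t),
    @is_heffter lam t m n s k _ A.

Definition exists_heffter_sq (lam t n k : nat) : Prop :=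
  exists_heffter lam t n n k k.

From mathcomp Require Import all_boot all_order all_algebra zify.
Set Implicit Arguments. Unset Strict Implicit. Unset Printing Implicit Defensive.
Import GRing.Theory.

(* Let n >= 3 be odd, lam | 2n and t = 2n/lam; then v = 2*3n/lam + t = 4t and
   8n = lam * v.  A single integer array works for every lam.  Its cell
   (i, i + d mod n), d = 0, 1, 2, holds
       b(i,0) = 1 + 8i,   b(i,1) = 5 + 16(n - i),   b(i,2) = 2 + 8(i + n - 1),
   and all other cells are empty.  Every row and every column sums to a
   multiple of 8n, and for odd n the 6n numbers +-b(i,d) are, modulo 8n,
   exactly the residues that are not multiples of 4: the residue mod 8
   determines d and the sign, and the remaining part is an affine function of i
   with slope +-1 or +-2, injective modulo the odd number n.  Reducing modulo
   v (4 | v | 8n), every non-multiple of 4 in Z_v is then hit 8n/v = lam times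
   and the multiples of 4, i.e. the subgroup J of order t, never. *)

Lemma modn_lt_double n x : x < n + n -> x %% n = if x < n then x else x - n.
Proof.
move=> x_lt; case: (ltnP x n) => x_n; first by rewrite modn_small.
by rewrite -{1}(subnK x_n) modnDr modn_small //; lia.
Qed.

Definition offset (n j i : nat) : nat := (j + n - i) %% n.

Lemma offset_lt n j i : 0 < n -> offset n j i < n.
Proof. by move=> n_gt0; rewrite /offset ltn_pmod. Qed.

Lemma offset_shift n i d : i < n -> d < n -> offset n ((i + d) %% n) i = d.
Proof.
move=> lt_i lt_d; rewrite /offset (modn_lt_double (x := i + d)); last lia.
by case: ltnP => ?; rewrite modn_lt_double; try lia; case: ltnP => ?; lia.
Qed.

Lemma offset_involutive n j d : j < n -> d < n -> offset n j (offset n j d) = d.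
Proof.
move=> lt_j lt_d; rewrite /offset (modn_lt_double (x := j + n - d)); last lia.
by case: ltnP => ?; rewrite modn_lt_double; try lia; case: ltnP => ?; lia.
Qed.

Lemma card_set_sum (T : finType) (P : pred T) :
  #|[set x | P x]| = \sum_(x : T) (P x : nat).
Proof.
by rewrite -sum1_card big_mkcond /=; apply: eq_bigr => x _; rewrite inE; case: (P x).
Qed.

Section BandArray.

(* Every row and column sees each offset
   d < k exactly once, which turns row/column statements into sums over d < k. *)

Variables (n k : nat).
Hypotheses (n_gt0 : 0 < n) (k_le_n : k <= n).

Definition shift_ord (i : nat) (d : 'I_n) : 'I_n :=
  Ordinal (ltn_pmod (i + d) n_gt0).
Definition unshift_ord (j : nat) (d : 'I_n) : 'I_n :=
  Ordinal (offset_lt j d n_gt0).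

Lemma shift_ord_inj (i : 'I_n) : injective (shift_ord i).
Proof.
move=> d d' /(congr1 (fun x : 'I_n => offset n x i)) /=.
by rewrite !offset_shift // => /val_inj.
Qed.

Lemma unshift_ord_inj (j : 'I_n) : injective (unshift_ord j).
Proof.
move=> d d' /(congr1 (fun x : 'I_n => offset n j x)) /=.
by rewrite !offset_involutive // => /val_inj.
Qed.

Lemma big_row_offset (R : Type) (idx : R) (op : Monoid.com_law idx)
    (i : 'I_n) (F : nat -> R) :
  \big[op/idx]_(j < n) F (offset n j i) = \big[op/idx]_(d < n) F d.
Proof.
rewrite (reindex_inj (@shift_ord_inj i)) /=.
by apply: eq_bigr => d _; rewrite offset_shift.
Qed.

Lemma big_col_offset (R : Type) (idx : R) (op : Monoid.com_law idx)
    (j : 'I_n) (F : nat -> nat -> R) :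
  \big[op/idx]_(i < n) F i (offset n j i) = \big[op/idx]_(d < n) F (offset n j d) d.
Proof.
rewrite (reindex_inj (@unshift_ord_inj j)) /=.
by apply: eq_bigr => d _; rewrite offset_involutive.
Qed.

Lemma big_band_cut (R : Type) (idx : R) (op : Monoid.com_law idx) (F : nat -> R) :
  \big[op/idx]_(d < n) (if d < k then F d else idx) = \big[op/idx]_(d < k) F d.
Proof. by rewrite -big_mkcond -big_ord_widen. Qed.

Variables (R : nmodType) (e : nat -> nat -> R).

Definition band (i j : 'I_n) : option R :=
  if offset n j i < k then Some (e i (offset n j i)) else None.

Lemma big_band_row (S : Type) (idx : S) (op : Monoid.com_law idx)
    (G : option R -> S) (i : 'I_n) : G None = idx ->
  \big[op/idx]_(j < n) G (band i j) = \big[op/idx]_(d < k) G (Some (e i d)).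
Proof.
move=> G_None; rewrite /band.
rewrite (big_row_offset op i (fun d => G (if d < k then Some (e i d) else None))).
rewrite -(big_band_cut op (fun d => G (Some (e i d)))).
by apply: eq_bigr => d _; case: ifP.
Qed.

Lemma big_band_col (S : Type) (idx : S) (op : Monoid.com_law idx)
    (G : option R -> S) (j : 'I_n) : G None = idx ->
  \big[op/idx]_(i < n) G (band i j) = \big[op/idx]_(d < k) G (Some (e (offset n j d) d)).
Proof.
move=> G_None; rewrite /band.
rewrite (big_col_offset op j (fun i d => G (if d < k then Some (e i d) else None))).
rewrite -(big_band_cut op (fun d => G (Some (e (offset n j d) d)))).
by apply: eq_bigr => d _; case: ifP.
Qed.

Lemma band_row_card (i : 'I_n) : #|[set j : 'I_n | band i j != None]| = k.
Proof.
rewrite card_set_sum (@big_band_row _ _ _ (fun o => (o != None : nat))) //.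
by rewrite big_const_ord iter_addn_0 mul1n.
Qed.

Lemma band_col_card (j : 'I_n) : #|[set i : 'I_n | band i j != None]| = k.
Proof.
rewrite card_set_sum (@big_band_col _ _ _ (fun o => (o != None : nat))) //.
by rewrite big_const_ord iter_addn_0 mul1n.
Qed.

Lemma band_row_sum (i : 'I_n) :
  (\sum_(j < n) odflt 0 (band i j) = \sum_(d < k) e i d)%R.
Proof. exact: (@big_band_row _ _ _ (odflt 0%R)). Qed.

Lemma band_col_sum (j : 'I_n) :
  (\sum_(i < n) odflt 0 (band i j) = \sum_(d < k) e (offset n j d) d)%R.
Proof. exact: (@big_band_col _ _ _ (odflt 0%R)). Qed.

Lemma band_count (w : R) :
  #|[set p : 'I_n * 'I_n | band p.1 p.2 == Some w]| =
  \sum_(i < n) \sum_(d < k) (e i d == w : nat).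
Proof.
rewrite card_set_sum -(pair_bigA _ (fun i j => (band i j == Some w : nat))) /=.
by apply: eq_bigr => i _; rewrite (@big_band_row _ _ _ (fun o => (o == Some w : nat))).
Qed.

End BandArray.
Arguments band n k {R} e i j.

(* The entry b(i,d) at offset d of row i (neg = false), resp. the representative
   in [0, 8n) of its opposite modulo 8n (neg = true), written as
   entry_res d neg + 8 * entry_level n i d neg. *)
Definition entry_res (d : nat) (neg : bool) : nat :=
  match d, neg with
  | 0, false => 1 | 0, true => 7
  | 1, false => 5 | 1, true => 3
  | _, false => 2 | _, true => 6 end.

Definition entry_level (n i d : nat) (neg : bool) : nat :=
  match d, neg with
  | 0, false => i           | 0, true => n - 1 - i
  | 1, false => 2 * (n - i) | 1, true => 2 * i + n - 1
  | _, false => i + n - 1   | _, true => n - i end.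

Definition entry (n i d : nat) (neg : bool) : nat :=
  entry_res d neg + 8 * entry_level n i d neg.

Lemma entry_opp n i d : i < n -> d < 3 ->
  8 * n %| entry n i d false + entry n i d true.
Proof.
move=> lt_i; case: d => [|[|[|d]]] // _; apply/dvdnP; rewrite /entry /entry_level /=.
- by exists 1; lia.
- by exists 3; lia.
- by exists 2; lia.
Qed.

Lemma entry_row_sum n i : i < n ->
  8 * n %| \sum_(d < 3) entry n i d false.
Proof.
move=> lt_i; rewrite !big_ord_recr big_ord0 /=.
by apply/dvdnP; exists 3; rewrite /entry /=; lia.
Qed.

(* Column j holds the entries at offset d of the rows j, j-1, j-2 (mod n); its
   sum is 16n, 32n or 24n according as j = 0, j = 1 or j >= 2. *)
Lemma entry_col_sum n j : j < n -> 3 <= n ->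
  8 * n %| \sum_(d < 3) entry n (offset n j d) d false.
Proof.
move=> lt_j n_ge3; rewrite !big_ord_recr big_ord0 /= /offset.
rewrite !(modn_lt_double (n := n)); try lia.
have [-> | j_neq0] := eqVneq j 0; last have [-> | j_neq1] := eqVneq j 1.
- do 3 (case: ltnP; try lia; move=> _).
  by apply/dvdnP; exists 2; rewrite /entry /=; lia.
- do 3 (case: ltnP; try lia; move=> _).
  by apply/dvdnP; exists 4; rewrite /entry /=; lia.
- do 3 (case: ltnP; try lia; move=> _).
  by apply/dvdnP; exists 3; rewrite /entry /=; lia.
Qed.

Lemma mul_mod_inj n c i i' : coprime c n -> i < n -> i' < n ->
  c * i = c * i' %[mod n] -> i = i'.
Proof.
move=> co_cn lt_i lt_i'.
wlog le_i'i : i i' lt_i lt_i' / i' <= i.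
  move=> wlog_le eq_mod; case: (leqP i' i) => [le | /ltnW le].
  - exact: wlog_le.
  - exact/esym/wlog_le.
move/eqP; rewrite eqn_mod_dvd ?leq_mul2l ?le_i'i ?orbT // -mulnBr.
rewrite Gauss_dvdr; last by rewrite coprime_sym.
have [/eqP | diff_gt0] := posnP (i - i'); first by rewrite subn_eq0; lia.
by rewrite gtnNdvd //; lia.
Qed.

Lemma eqn_mod_shift n a b x A B : a + x = A -> b + x = B ->
  (a == b %[mod n]) = (A == B %[mod n]).
Proof. by move=> <- <-; rewrite eqn_modDr. Qed.

(* For odd n each level function is affine in i with slope +-1 or +-2 modulo n,
   hence injective on residues; for a negative slope both sides are shifted by
   a multiple of i + i' to reach a positive one. *)
Lemma entry_level_inj n i i' d neg : odd n -> i < n -> i' < n -> d < 3 ->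
  entry_level n i d neg = entry_level n i' d neg %[mod n] -> i = i'.
Proof.
move=> n_odd lt_i lt_i' lt_d /eqP.
have co2 : coprime 2 n by rewrite coprime2n.
case: d lt_d => [|[|[|d]]] // _; case: neg => /=.
- rewrite (eqn_mod_shift (x := i + i') (A := n - 1 + i') (B := n - 1 + i) _ _); try lia.
  by rewrite eqn_modDl !modn_small //; lia.
- by rewrite !modn_small //; lia.
- rewrite (eqn_mod_shift (x := 0) (A := n - 1 + 2 * i) (B := n - 1 + 2 * i') _ _); try lia.
  by rewrite eqn_modDl => /eqP /(mul_mod_inj co2 lt_i lt_i').
- rewrite (eqn_mod_shift (x := 2 * i + 2 * i') (A := 2 * n + 2 * i') (B := 2 * n + 2 * i) _ _); try lia.
  by rewrite eqn_modDl => /eqP /(mul_mod_inj co2 lt_i' lt_i).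
- rewrite (eqn_mod_shift (x := i + i') (A := n + i') (B := n + i) _ _); try lia.
  by rewrite eqn_modDl !modn_small //; lia.
- rewrite (eqn_mod_shift (x := 0) (A := n - 1 + i) (B := n - 1 + i') _ _); try lia.
  by rewrite eqn_modDl !modn_small //; lia.
Qed.

Lemma entry_mod8 n i d neg : entry n i d neg %% 8 = entry_res d neg.
Proof. by rewrite /entry addnC mulnC modnMDl modn_small //; case: d => [|[|?]]; case: neg. Qed.

Lemma entry_res_inj d d' neg neg' : d < 3 -> d' < 3 ->
  entry_res d neg = entry_res d' neg' -> d = d' /\ neg = neg'.
Proof. by case: d => [|[|[|?]]] //; case: d' => [|[|[|?]]] //; case: neg; case: neg'. Qed.

Lemma entry_mod4 n i d neg : entry n i d neg %% 4 != 0.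
Proof.
rewrite -(modn_dvdm _ (isT : 4 %| 8)) entry_mod8.
by case: d => [|[|?]]; case: neg.
Qed.

Lemma entry_inj n i i' d d' neg neg' : odd n -> i < n -> i' < n -> d < 3 -> d' < 3 ->
  entry n i d neg = entry n i' d' neg' %[mod 8 * n] ->
  [/\ i = i', d = d' & neg = neg'].
Proof.
move=> n_odd lt_i lt_i' lt_d lt_d' eq_mod.
have /(congr1 (modn^~ 8)) := eq_mod; rewrite /= !(modn_dvdm _ (dvdn_mulr n (dvdnn 8))).
rewrite !entry_mod8 => /(entry_res_inj lt_d lt_d') [eq_d eq_neg]; subst d' neg'.
split => //; apply: (entry_level_inj (n := n) (d := d) (neg := neg)) => //.
by move/eqP: eq_mod; rewrite /entry eqn_modDl -!muln_modr eqn_pmul2l // => /eqP.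
Qed.

Lemma card_residue N m d y : N = m * d -> y < d -> #|[set z : 'I_N | z %% d == y]| = m.
Proof.
move=> -> lt_y; rewrite card_set_sum -(big_mkord xpredT (fun z => (z %% d == y : nat))).
elim: m => [|m IHm]; first by rewrite mul0n big_geq.
rewrite mulSn addnC (@big_cat_nat _ _ _ (m * d)) ?leq_addr //= IHm.
rewrite -{1}(add0n (m * d)) big_addn addKn big_mkord.
rewrite (eq_bigr (fun i : 'I_d => (i == Ordinal lt_y : nat))) => [|i _]; last first.
  by rewrite addnC modnMDl modn_small.
rewrite (bigD1 (Ordinal lt_y)) //= eqxx big1 => [|i /negbTE -> //]; lia.
Qed.

Lemma card_nonmult4_residue N v y : v %| N -> 4 %| v -> y < v ->
  #|[set z : 'I_N | (z %% 4 != 0) && (z %% v == y)]| = if 4 %| y then 0 else N %/ v.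
Proof.
move=> v_dvd_N four_dvd_v lt_y.
have mod4_res (z : nat) : z %% v == y -> (z %% 4 == 0) = (4 %| y).
  by move/eqP <-; rewrite /dvdn modn_dvdm.
case: ifP => four_dvd_y.
  apply/eqP; rewrite cards_eq0; apply/eqP/setP => z; rewrite !inE.
  by apply/negP => /andP[/negbTE z_nmult4 /mod4_res]; rewrite z_nmult4 four_dvd_y.
have -> : [set z : 'I_N | (z %% 4 != 0) && (z %% v == y)] = [set z : 'I_N | z %% v == y].
  by apply/setP => z; rewrite !inE; apply: andb_idl => /mod4_res ->; rewrite four_dvd_y.
by rewrite (card_residue (m := N %/ v)) ?divnK.
Qed.

Section SignedEntries.

(* The 6n signed entries: index (i, (d, neg)) stands for the entry at offset d
   of row i (neg = false) or for its opposite (neg = true). *)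

Variable n : nat.
Hypothesis n_odd : odd n.

Fact eight_n_gt0 : 0 < 8 * n.
Proof. by rewrite muln_gt0 (odd_gt0 n_odd). Qed.

Definition signed_entry (q : 'I_n * ('I_3 * bool)) : nat := entry n q.1 q.2.1 q.2.2.

Definition signed_entry_ord (q : 'I_n * ('I_3 * bool)) : 'I_(8 * n) :=
  Ordinal (ltn_pmod (signed_entry q) eight_n_gt0).

Lemma signed_entry_ord_inj : injective signed_entry_ord.
Proof.
move=> [i [d neg]] [i' [d' neg']] /(congr1 val); rewrite /= /signed_entry /= => eq_mod.
have [] := entry_inj n_odd (ltn_ord i) (ltn_ord i') (ltn_ord d) (ltn_ord d') eq_mod.
by move=> /val_inj -> /val_inj -> ->.
Qed.

Lemma signed_entry_cover :
  signed_entry_ord @: setT = [set z : 'I_(8 * n) | z %% 4 != 0].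
Proof.
apply/eqP; rewrite eqEcard; apply/andP; split.
  apply/subsetP => _ /imsetP[q _ ->]; rewrite inE /=.
  by rewrite (modn_dvdm _ (dvdn_mulr n (isT : 4 %| 8))) entry_mod4.
rewrite card_imset; last exact: signed_entry_ord_inj.
rewrite cardsT !card_prod !card_ord card_bool.
have := cardsC [set z : 'I_(8 * n) | z %% 4 == 0].
rewrite card_ord (@card_residue _ (2 * n)) //; last by lia.
have -> : ~: [set z : 'I_(8 * n) | z %% 4 == 0] = [set z : 'I_(8 * n) | z %% 4 != 0].
  by apply/setP => z; rewrite !inE.
lia.
Qed.

Lemma card_signed_entry_residue v y : v %| 8 * n -> 4 %| v -> y < v ->
  #|[set q | signed_entry q %% v == y]| = if 4 %| y then 0 else 8 * n %/ v.
Proof.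
move=> v_dvd four_dvd_v lt_y.
rewrite -(card_imset _ signed_entry_ord_inj) -card_nonmult4_residue //.
apply: eq_card => z; rewrite [RHS]inE; apply/imsetP/andP.
- move=> [q]; rewrite inE => res_q ->; split; last by rewrite /= modn_dvdm.
  by have := imset_f signed_entry_ord (in_setT q); rewrite signed_entry_cover inE.
- move=> [nmult4_z res_z].
  have : z \in signed_entry_ord @: setT by rewrite signed_entry_cover inE.
  case/imsetP => q _ z_q.
  by exists q => //; rewrite inE -(modn_dvdm _ v_dvd); rewrite z_q in res_z.
Qed.

End SignedEntries.

Lemma natr_Zp_eq0 v a : 1 < v -> v %| a -> (a%:R : 'Z_v)%R = 0%R.
Proof. by move=> v_gt1 /dvdnP[c ->]; rewrite natrM pchar_Zp // mulr0. Qed.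

Lemma natr_Zp_eq v a (y : 'Z_v) : 1 < v -> ((a%:R : 'Z_v) == y)%R = (a %% v == y).
Proof. by move=> v_gt1; rewrite -val_eqE /= val_Zp_nat. Qed.

Definition base_array n v : 'I_n -> 'I_n -> option 'Z_v :=
  band n 3 (fun i d => (entry n i d false)%:R)%R.

Section BaseArray.

Variables (n v : nat).
Hypotheses (n_ge3 : 3 <= n) (v_gt1 : 1 < v) (v_dvd : v %| 8 * n).

Fact n_gt0 : 0 < n.
Proof. exact: leq_trans n_ge3. Qed.

Lemma base_array_row_sum (i : 'I_n) : (\sum_(j < n) odflt 0 (base_array v i j))%R = 0%R.
Proof.
rewrite band_row_sum ?n_gt0 // -natr_sum natr_Zp_eq0 //.
exact: dvdn_trans v_dvd (entry_row_sum (ltn_ord i)).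
Qed.

Lemma base_array_col_sum (j : 'I_n) : (\sum_(i < n) odflt 0 (base_array v i j))%R = 0%R.
Proof.
rewrite band_col_sum ?n_gt0 // -natr_sum natr_Zp_eq0 //.
exact: dvdn_trans v_dvd (entry_col_sum (ltn_ord j) n_ge3).
Qed.

Lemma entry_eq_opp i d (y : 'Z_v) : i < n -> d < 3 ->
  (((entry n i d false)%:R : 'Z_v) == - y)%R = (entry n i d true %% v == y).
Proof.
move=> lt_i lt_d.
have opp_entry : ((entry n i d true)%:R = - (entry n i d false)%:R :> 'Z_v)%R.
  apply/eqP; rewrite -addr_eq0 -natrD addnC natr_Zp_eq0 //.
  exact: dvdn_trans v_dvd (entry_opp lt_i lt_d).
by rewrite -natr_Zp_eq // opp_entry eqr_oppLR.
Qed.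

Lemma base_array_signed_count (y : 'Z_v) :
  #|[set p : 'I_n * 'I_n | base_array v p.1 p.2 == Some y]|
  + #|[set p : 'I_n * 'I_n | base_array v p.1 p.2 == Some (- y)%R]|
  = #|[set q : 'I_n * ('I_3 * bool) | signed_entry q %% v == y]|.
Proof.
rewrite !band_count ?n_gt0 // -big_split card_set_sum /=.
rewrite -(pair_bigA _ (fun i p => (signed_entry (i, p) %% v == y : nat))) /=.
apply: eq_bigr => i _; rewrite -big_split /=.
rewrite -(pair_bigA _ (fun d neg => (signed_entry (i, (d, neg)) %% v == y : nat))) /=.
apply: eq_bigr => d _; rewrite big_bool entry_eq_opp // natr_Zp_eq //.
by rewrite addnC.
Qed.

End BaseArray.

(* For odd n >= 3 and 2n = lam * t, the base array over Z_v with v = 4t is a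
   ^lam H_t(n;3): J consists of the multiples of 4 and 8n = lam * v. *)
Lemma base_array_heffter n lam t v : odd n -> 3 <= n -> 2 * n = lam * t -> v = 4 * t ->
  @is_heffter lam t n n 3 3 v (base_array v).
Proof.
move=> n_odd n_ge3 two_n v_eq.
have t_gt0 : 0 < t by case: t two_n {v_eq} => [|//]; rewrite muln0; lia.
have v_gt1 : 1 < v by lia.
have eight_n : 8 * n = lam * v by rewrite v_eq; lia.
have v_dvd : v %| 8 * n by rewrite eight_n dvdn_mull.
have four_dvd_v : 4 %| v by rewrite v_eq dvdn_mulr.
split; first by move=> i; apply: band_row_card => //; lia.
split; first by move=> j; apply: band_col_card => //; lia.
split; last by split=> [i | j]; [apply: base_array_row_sum | apply: base_array_col_sum].
move=> y; rewrite base_array_signed_count // card_signed_entry_residue //; last first.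
  by rewrite -[X in _ < X](Zp_cast v_gt1) ltn_ord.
have v_div_t : v %/ t = 4 by rewrite v_eq mulnK.
by rewrite /subJ inE v_div_t eight_n mulnK //; lia.
Qed.

Theorem proposition4 (n lam : nat) :
  odd n -> (3 <= n)%N -> (0 < lam)%N -> (lam %| 2 * n)%N ->
  exists_heffter_sq lam ((2 * n) %/ lam) n 3.
Proof.
move=> n_odd n_ge3 lam_gt0 lam_dvd.
set t := (2 * n) %/ lam.
have two_n : 2 * n = lam * t by rewrite [RHS]mulnC divnK.
have t_gt0 : 0 < t by case: (t) two_n => [|//]; rewrite muln0; lia.
have three_t : (2 * n * 3) %/ lam = 3 * t by rewrite two_n -mulnA mulKn // mulnC.
do 6 (split; first by lia).
split; first by rewrite dvdn_mulr.
split; first by rewrite three_t dvdn_mull.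
by exists (base_array _); apply: base_array_heffter => //; rewrite three_t; lia.
Qed.
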